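(* $\operatorname{BWT}_2\times\lim\le_{\mathrm{sW}}\operatorname{Proj}^-_\mathbb{R}$.
   Context: Represented spaces: a representation of a set $X$ is a partial surjection $\delta_X:\subseteq\mathbb{N}^\mathbb{N}\to X$. For a partial multi-valued function $f:\subseteq X\rightrightarrows Y$, a realizer is a partial $F:\subseteq\mathbb{N}^\mathbb{N}\to\mathbb{N}^\mathbb{N}$ with $\delta_Y(F(p))\in f(\delta_X(p))$ for all $p$ with $\delta_X(p)\in\mathrm{dom}(f)$. Strong Weihrauch reducibility $f\le_{\mathrm{sW}}g$: there are computable partial $H,K:\subseteq\mathbb{N}^\mathbb{N}\to\mathbb{N}^\mathbb{N}$ with $H\circ G\circ K$ a realizer of $f$ for every realizer $G$ of $g$. For multi-valued $f,g$, the product $f\times g$ maps $(x,y)\in\mathrm{dom}(f)\times\mathrm{dom}(g)$ to $f(x)\times g(y)$. $\operatorname{BWT}_2:\{0,1\}^\mathbb{N}\rightrightarrows\{0,1\}$ maps a binary sequence to the set of values occurring in it infinitely often. $\lim:\subseteq(\mathbb{N}^\mathbb{N})^\mathbb{N}\to\mathbb{N}^\mathbb{N}$ maps a convergent sequence in Baire space to its limit. $\mathbb{R}$ has the Cauchy representation. $\mathcal{A}_-(\mathbb{R})$: closed subsets of $\mathbb{R}$, a name of $A$ being an enumeration of rational open intervals whose union is $\mathbb{R}\setminus A$. $\operatorname{Proj}^-_\mathbb{R}:\subseteq\mathbb{R}\times\mathcal{A}_-(\mathbb{R})\rightrightarrows\mathbb{R}$ maps $(x,A)$ with $A$ nonempty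 closed to the set of $y\in A$ with $|x-y|=d(x,A)$. *)

From Stdlib Require Import Reals QArith Qreals Arith List Rtopology.
Open Scope R_scope.

Definition baire := nat -> nat.

(** A representation of X: the graph of a partial map delta :⊆ N^N -> X.
    (p names x)  <->  delta p x. *)
Definition repr (X : Type) := baire -> X -> Prop.

Definition mvf (X Y : Type) := X -> Y -> Prop.
Definition mdom {X Y} (f : mvf X Y) (x : X) : Prop := exists y, f x y.

Definition mvprod {X Y U V} (f : mvf X Y) (g : mvf U V) : mvf (X * U) (Y * V) :=
  fun xu yv => f (fst xu) (fst yv) /\ g (snd xu) (snd yv).

(** Realizers: arbitrary partial functions N^N -> N^N (as option-valued maps). *)
Definition realizer {X Y} (dX : repr X) (dY : repr Y) (f : mvf X Y)
  (F : baire -> option baire) : Prop :=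
  forall p x, dX p x -> mdom f x ->
    exists q, F p = Some q /\ exists y, dY q y /\ f x y.

Inductive code : Type :=
| cZero : code
| cSucc : code
| cProj : nat -> code
| cOracle : code
| cComp : code -> list code -> code
| cRec : code -> code -> code
| cMu : code -> code.

Inductive ev (p : baire) : code -> list nat -> nat -> Prop :=
| ev_zero : forall v, ev p cZero v 0
| ev_succ : forall v, ev p cSucc v (S (hd 0%nat v))
| ev_proj : forall i v, ev p (cProj i) v (nth i v 0%nat)
| ev_oracle : forall v, ev p cOracle v (p (hd 0%nat v))
| ev_comp : forall f gs v ws y, evs p gs v ws -> ev p f ws y -> ev p (cComp f gs) v y
| ev_rec0 : forall f g v y, ev p f v y -> ev p (cRec f g) (0%nat :: v) y
| ev_recS : forall f g n v z y,
    ev p (cRec f g) (n :: v) z -> ev p g (n :: z :: v) y ->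
    ev p (cRec f g) (S n :: v) y
| ev_mu : forall f v n,
    ev p f (n :: v) 0%nat ->
    (forall m, (m < n)%nat -> exists k, ev p f (m :: v) (S k)) ->
    ev p (cMu f) v n
with evs (p : baire) : list code -> list nat -> list nat -> Prop :=
| evs_nil : forall v, evs p nil v nil
| evs_cons : forall g gs v w ws, ev p g v w -> evs p gs v ws -> evs p (g :: gs) v (w :: ws).

Definition computes (e : code) (p q : baire) : Prop :=
  forall n, ev p e (n :: nil) (q n).

Definition sW_reducible {X Y U V}
  (dX : repr X) (dY : repr Y) (f : mvf X Y)
  (dU : repr U) (dV : repr V) (g : mvf U V) : Prop :=
  exists eH eK : code,
    forall G : baire -> option baire, realizer dU dV g G ->
      forall p x, dX p x -> mdom f x ->
        exists q, computes eK p q /\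
        exists r, G q = Some r /\
        exists s, computes eH r s /\
        exists y, dY s y /\ f x y.

Definition cpair (i j : nat) : nat := ((i + j) * (i + j + 1) / 2 + j)%nat.

Definition dprod {X Y} (dX : repr X) (dY : repr Y) : repr (X * Y) :=
  fun p xy => dX (fun n => p (2 * n)%nat) (fst xy) /\
              dY (fun n => p (2 * n + 1)%nat) (snd xy).

Definition zdec (n : nat) : Z :=
  if Nat.even n then Z.of_nat (Nat.div2 n) else (- Z.of_nat (S (Nat.div2 n)))%Z.
Definition qdec (i j : nat) : R := Q2R (Qmake (zdec i) (Pos.of_succ_nat j)).

Definition dCantor : repr (nat -> bool) :=
  fun p s => forall n, p n = (if s n then 1 else 0)%nat.

Definition dBool : repr bool :=
  fun p b => p 0%nat = (if b then 1 else 0)%nat.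

Definition dBaire : repr baire := fun p q => forall n, p n = q n.

Definition dSeq : repr (nat -> baire) :=
  fun p qs => forall i n, p (cpair i n) = qs i n.

Definition dR : repr R :=
  fun p x => forall n, exists i j, p n = cpair i j /\ Rabs (qdec i j - x) <= (/ 2) ^ n.

(** A_-(R): p enumerates rational open intervals (p(n) = 0: no interval,
    p(n) = 1 + <<i,j>,<k,l>>: the interval (qdec i j, qdec k l)) whose union
    is the complement of A. *)
Definition dA : repr (R -> Prop) :=
  fun p A => forall x, A x <->
    ~ (exists n i j k l, p n = S (cpair (cpair i j) (cpair k l)) /\
                         qdec i j < x < qdec k l).

Definition BWT2 : mvf (nat -> bool) bool :=
  fun s b => forall N, exists n, (N <= n)%nat /\ s n = b.

Definition lim : mvf (nat -> baire) baire :=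
  fun qs q => forall k, exists N, forall i, (N <= i)%nat ->
                forall n, (n < k)%nat -> qs i n = q n.

Definition is_inf (S : R -> Prop) (m : R) : Prop :=
  (forall s, S s -> m <= s) /\ (forall m', (forall s, S s -> m' <= s) -> m' <= m).

Definition Proj : mvf (R * (R -> Prop)) R :=
  fun xA y =>
    let x := fst xA in let A := snd xA in
    closed_set A /\ (exists a, A a) /\ A y /\
    is_inf (fun r => exists a, A a /\ r = Rabs (x - a)) (Rabs (x - y)).

(* The reduction sends a name of [(s, (q_j)_j)] to the instance [(0, A)] of [Proj] with
   [A = (-oo, -(1 + a)] U [1 + b, +oo)], where [a, b] in [[0, 1/3]] are limits of base-4
   expansions with digits in {0, 1} that are enumerated from below, which makes [A] computable
   as an [A_-]-name.  Even digits count the ones of [s] (for [a]) and its zeros (for [b]): if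
   [s] has finitely many ones, the expansions first differ at an even digit where [a] has [0]
   and [b] has [1], so [a < b] and the projection of [0] is [-(1 + a)]; with finitely many
   zeros it is [1 + b].  So the sign of the projection [y] is a value occurring infinitely
   often in [s].  The odd digits, shared by [a] and [b], record whether [q_j(m)] leaves a
   candidate value [v] after a stage [t].  Since [|y| - 1] has digits in {0, 1}, each digit is
   read off exactly from a good approximation of [y], and a search for the least [<v, t>]
   whose digit is [0] computes [lim_j q_j(m)]. *)

From Stdlib Require Import Reals Arith Lia List Lra Classical ZArith Qreals.
Import ListNotations.
Local Open Scope nat_scope.

Notation arg v i := (nth i v 0).

(** * Oracle computations *)

Section Evaluation.
Variable p : baire.

Definition ev_fn (e : code) (F : list nat -> nat) : Prop := forall v, ev p e v (F v).

Lemma ev_fn_ext e F G : ev_fn e F -> (forall v, F v = G v) -> ev_fn e G.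
Proof. intros He FG v. rewrite <- FG. apply He. Qed.

Lemma ev_fn_comp f gs F Gs : ev_fn f F -> Forall2 ev_fn gs Gs ->
  ev_fn (cComp f gs) (fun v => F (map (fun G => G v) Gs)).
Proof.
  intros Hf Hgs v. eapply ev_comp; [|apply Hf].
  induction Hgs; simpl; constructor; auto.
Qed.

Lemma ev_fn_proj i : ev_fn (cProj i) (fun v => arg v i).
Proof. intro v. constructor. Qed.

Lemma ev_fn_zero : ev_fn cZero (fun _ => 0).
Proof. intro v. constructor. Qed.

Lemma ev_fn_succ : ev_fn cSucc (fun v => S (arg v 0)).
Proof. intro v. destruct v; apply ev_succ. Qed.

Lemma ev_fn_oracle : ev_fn cOracle (fun v => p (arg v 0)).
Proof. intro v. destruct v; apply ev_oracle. Qed.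

Fixpoint primrec (F G : list nat -> nat) (n : nat) (v : list nat) : nat :=
  match n with 0 => F v | S n' => G (n' :: primrec F G n' v :: v) end.

Lemma ev_cRec f g F G : ev_fn f F -> ev_fn g G ->
  forall n v, ev p (cRec f g) (n :: v) (primrec F G n v).
Proof.
  intros Hf Hg n v. induction n; simpl.
  - constructor. apply Hf.
  - eapply ev_recS; [apply IHn | apply Hg].
Qed.

Lemma ev_cMu_least f F v n : ev_fn f F -> F (n :: v) = 0 ->
  (forall m, m < n -> F (m :: v) <> 0) -> ev p (cMu f) v n.
Proof.
  intros Hf Hn Hlt. constructor.
  - rewrite <- Hn. apply Hf.
  - intros m Hm. specialize (Hlt m Hm).
    destruct (F (m :: v)) as [|k] eqn:E; [congruence|].
    exists k. rewrite <- E. apply Hf.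
Qed.

Lemma evs_proj l v : evs p (map cProj l) v (map (fun i => arg v i) l).
Proof. induction l; simpl; constructor; auto. constructor. Qed.

End Evaluation.

Fixpoint cconst (n : nat) : code :=
  match n with 0 => cZero | S n => cComp cSucc [cconst n] end.

Lemma ev_fn_const p n : ev_fn p (cconst n) (fun _ => n).
Proof.
  induction n; intro v; simpl; [constructor|].
  eapply ev_comp; [constructor; [apply IHn | constructor] | apply (ev_succ p [n])].
Qed.

(* [cprimrec k f g] recurses on its first argument and passes the next [k] along. *)
Definition cprimrec (k : nat) (f g : code) : code :=
  cComp (cRec f g) (map cProj (seq 0 (S k))).

Lemma ev_fn_primrec p k f g F G : ev_fn p f F -> ev_fn p g G ->
  ev_fn p (cprimrec k f g) (fun v => primrec F G (arg v 0) (map (fun i => arg v i) (seq 1 k))).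
Proof.
  intros Hf Hg v. eapply ev_comp; [apply evs_proj|].
  simpl. apply ev_cRec; auto.
Qed.

Create HintDb evfn.
#[export] Hint Resolve ev_fn_proj ev_fn_zero ev_fn_succ ev_fn_oracle ev_fn_const : evfn.

(* [ev_solve] proves [ev_fn p e ?F] for [e] assembled from codes with an [ev_fn] hint, building
   [?F]; [ev_fn_by] leaves the equation between that [?F] and the intended function. *)
Ltac ev_solve := first [ eassumption | solve [eauto with evfn]
  | (eapply ev_fn_comp; [ev_solve | ev_solve_list]) ]
with ev_solve_list := first [ apply Forall2_nil | (apply Forall2_cons; [ev_solve | ev_solve_list]) ].

Ltac ev_fn_by := eapply ev_fn_ext; [ev_solve | intro v; cbn [map nth]; try reflexivity].
Ltac ev_fn_primrec_by := eapply ev_fn_ext; [apply ev_fn_primrec; ev_solve | intro v; simpl].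

Definition cadd := cprimrec 1 (cProj 0) (cComp cSucc [cProj 1]).
Lemma ev_fn_add p : ev_fn p cadd (fun v => arg v 0 + arg v 1).
Proof. ev_fn_primrec_by. generalize (arg v 0); induction n; simpl; auto. Qed.
#[export] Hint Resolve ev_fn_add : evfn.

Definition cpred := cprimrec 0 cZero (cProj 0).
Lemma ev_fn_pred p : ev_fn p cpred (fun v => Nat.pred (arg v 0)).
Proof. ev_fn_primrec_by. destruct (arg v 0); reflexivity. Qed.
#[export] Hint Resolve ev_fn_pred : evfn.

Definition csub := cComp (cprimrec 1 (cProj 0) (cComp cpred [cProj 1])) [cProj 1; cProj 0].
Lemma ev_fn_sub p : ev_fn p csub (fun v => arg v 0 - arg v 1).
Proof.
  assert (Hrev : ev_fn p (cprimrec 1 (cProj 0) (cComp cpred [cProj 1]))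
                   (fun v => arg v 1 - arg v 0)).
  { ev_fn_primrec_by. generalize (arg v 0). induction n; simpl; [lia|]. rewrite IHn. lia. }
  unfold csub. ev_fn_by.
Qed.
#[export] Hint Resolve ev_fn_sub : evfn.

Definition cmul := cprimrec 1 cZero (cComp cadd [cProj 1; cProj 2]).
Lemma ev_fn_mul p : ev_fn p cmul (fun v => arg v 0 * arg v 1).
Proof. ev_fn_primrec_by. generalize (arg v 0); induction n; simpl; auto. rewrite IHn. lia. Qed.
#[export] Hint Resolve ev_fn_mul : evfn.

Definition csg := cprimrec 0 cZero (cconst 1).
Lemma ev_fn_sg p : ev_fn p csg (fun v => match arg v 0 with 0 => 0 | _ => 1 end).
Proof. ev_fn_primrec_by. destruct (arg v 0); reflexivity. Qed.
#[export] Hint Resolve ev_fn_sg : evfn.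

Definition cifz := cprimrec 2 (cProj 0) (cProj 3).
Lemma ev_fn_ifz p : ev_fn p cifz (fun v => match arg v 0 with 0 => arg v 1 | _ => arg v 2 end).
Proof. ev_fn_primrec_by. destruct (arg v 0); reflexivity. Qed.
#[export] Hint Resolve ev_fn_ifz : evfn.

Lemma b2n_odd_succ n : Nat.b2n (Nat.odd (S n)) = 1 - Nat.b2n (Nat.odd n).
Proof. rewrite Nat.odd_succ, <- Nat.negb_odd. destruct (Nat.odd n); reflexivity. Qed.

Definition codd := cprimrec 0 cZero (cComp csub [cconst 1; cProj 1]).
Lemma ev_fn_odd p : ev_fn p codd (fun v => Nat.b2n (Nat.odd (arg v 0))).
Proof.
  ev_fn_primrec_by. generalize (arg v 0); induction n; [reflexivity|].
  simpl. rewrite IHn, b2n_odd_succ. reflexivity.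
Qed.
#[export] Hint Resolve ev_fn_odd : evfn.

Lemma div2_succ n : Nat.div2 (S n) = Nat.div2 n + Nat.b2n (Nat.odd n).
Proof.
  induction n; [reflexivity|].
  change (Nat.div2 (S (S n))) with (S (Nat.div2 n)).
  rewrite IHn, b2n_odd_succ. pose proof (Nat.b2n_le_1 (Nat.odd n)). lia.
Qed.

Definition chalf := cprimrec 0 cZero (cComp cadd [cProj 1; cComp codd [cProj 0]]).
Lemma ev_fn_half p : ev_fn p chalf (fun v => Nat.div2 (arg v 0)).
Proof.
  ev_fn_primrec_by. generalize (arg v 0); induction n; [reflexivity|].
  cbn [primrec nth]. rewrite IHn, div2_succ. reflexivity.
Qed.
#[export] Hint Resolve ev_fn_half : evfn.

Definition clt := cComp csg [cComp csub [cProj 1; cProj 0]].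
Lemma ev_fn_lt p : ev_fn p clt (fun v => Nat.b2n (arg v 0 <? arg v 1)).
Proof.
  unfold clt. ev_fn_by. destruct (Nat.ltb_spec (arg v 0) (arg v 1)).
  - destruct (arg v 1 - arg v 0) eqn:E; [lia | reflexivity].
  - replace (arg v 1 - arg v 0) with 0 by lia. reflexivity.
Qed.
#[export] Hint Resolve ev_fn_lt : evfn.

Definition cle := cComp clt [cProj 0; cComp cSucc [cProj 1]].
Lemma ev_fn_le p : ev_fn p cle (fun v => Nat.b2n (arg v 0 <=? arg v 1)).
Proof. unfold cle. ev_fn_by. Qed.
#[export] Hint Resolve ev_fn_le : evfn.

Definition cneq := cComp csg [cComp cadd [cComp csub [cProj 0; cProj 1]; cComp csub [cProj 1; cProj 0]]].
Lemma ev_fn_neq p : ev_fn p cneq (fun v => Nat.b2n (negb (arg v 0 =? arg v 1))).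
Proof.
  unfold cneq. ev_fn_by. destruct (Nat.eqb_spec (arg v 0) (arg v 1)) as [E|E].
  - rewrite E, Nat.sub_diag. reflexivity.
  - destruct (arg v 0 - arg v 1 + (arg v 1 - arg v 0)) eqn:E2; [lia | reflexivity].
Qed.
#[export] Hint Resolve ev_fn_neq : evfn.

Definition cmax := cComp cadd [cProj 0; cComp csub [cProj 1; cProj 0]].
Lemma ev_fn_max p : ev_fn p cmax (fun v => Nat.max (arg v 0) (arg v 1)).
Proof. unfold cmax. ev_fn_by. lia. Qed.
#[export] Hint Resolve ev_fn_max : evfn.

(* [a / S b] is the least [m] with [S a <= S m * S b]. *)
Definition cdivS := cMu (cComp csub [cComp cSucc [cProj 1];
  cComp cmul [cComp cSucc [cProj 0]; cComp cSucc [cProj 2]]]).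
Lemma ev_fn_divS p : ev_fn p cdivS (fun v => arg v 0 / S (arg v 1)).
Proof.
  intro u. eapply ev_cMu_least with (F := fun w => S (arg w 1) - S (arg w 0) * S (arg w 2)).
  - ev_fn_by.
  - cbn [nth]. pose proof (Nat.div_mod (arg u 0) (S (arg u 1)) ltac:(lia)).
    pose proof (Nat.mod_upper_bound (arg u 0) (S (arg u 1)) ltac:(lia)). nia.
  - intros m Hm. cbn [nth]. pose proof (Nat.div_mod (arg u 0) (S (arg u 1)) ltac:(lia)).
    assert (S m * S (arg u 1) <= arg u 0 / S (arg u 1) * S (arg u 1)) by nia. nia.
Qed.
#[export] Hint Resolve ev_fn_divS : evfn.

Definition cpow4 := cprimrec 0 (cconst 1) (cComp cmul [cconst 4; cProj 1]).
Lemma ev_fn_pow4 p : ev_fn p cpow4 (fun v => 4 ^ arg v 0).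
Proof. ev_fn_primrec_by. generalize (arg v 0); induction n; simpl; auto. Qed.
#[export] Hint Resolve ev_fn_pow4 : evfn.

Fixpoint tri (d : nat) : nat := match d with 0 => 0 | S d => tri d + S d end.

Definition ctri := cprimrec 0 cZero (cComp cadd [cProj 1; cComp cSucc [cProj 0]]).
Lemma ev_fn_tri p : ev_fn p ctri (fun v => tri (arg v 0)).
Proof. ev_fn_primrec_by. generalize (arg v 0); induction n; simpl; auto. Qed.
#[export] Hint Resolve ev_fn_tri : evfn.

Lemma tri_mono a b : a <= b -> tri a <= tri b.
Proof. induction 1; simpl; lia. Qed.

Lemma cpair_tri i j : cpair i j = tri (i + j) + j.
Proof.
  unfold cpair. f_equal.
  assert (E : 2 * tri (i + j) = (i + j) * (i + j + 1)) by (induction (i + j); simpl in *; lia).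
  rewrite <- E, Nat.mul_comm. apply Nat.div_mul. lia.
Qed.

Definition ccpair := cComp cadd [cComp ctri [cComp cadd [cProj 0; cProj 1]]; cProj 1].
Lemma ev_fn_cpair p : ev_fn p ccpair (fun v => cpair (arg v 0) (arg v 1)).
Proof. unfold ccpair. ev_fn_by. rewrite cpair_tri. reflexivity. Qed.
#[export] Hint Resolve ev_fn_cpair : evfn.

Fixpoint unpair (w : nat) : nat * nat :=
  match w with
  | 0 => (0, 0)
  | S w => let (i, j) := unpair w in
           match i with 0 => (S j, 0) | S i => (i, S j) end
  end.

Lemma unpair_tri w : tri (fst (unpair w) + snd (unpair w)) + snd (unpair w) = w.
Proof.
  induction w; simpl; [reflexivity|].
  destruct (unpair w) as [[|i] j]; simpl in *.
  - rewrite !Nat.add_0_r in *. lia.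
  - replace (i + S j) with (S (i + j)) by lia. simpl in *. lia.
Qed.

Lemma tri_inj d j d' j' : j <= d -> j' <= d' -> tri d + j = tri d' + j' -> d = d' /\ j = j'.
Proof.
  intros Hj Hj' E. destruct (lt_eq_lt_dec d d') as [[Hlt|Heq]|Hlt].
  - pose proof (tri_mono (S d) d' Hlt). simpl in *. lia.
  - subst. lia.
  - pose proof (tri_mono (S d') d Hlt). simpl in *. lia.
Qed.

Lemma unpair_cpair i j : unpair (cpair i j) = (i, j).
Proof.
  rewrite cpair_tri. pose proof (unpair_tri (tri (i + j) + j)) as E.
  destruct (unpair (tri (i + j) + j)) as [a b]; simpl in *.
  apply tri_inj in E as [E1 E2]; try lia. f_equal; lia.
Qed.

Lemma cpair_inj i j k l : cpair i j = cpair k l -> i = k /\ j = l.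
Proof.
  intro E. pose proof (unpair_cpair i j) as H. rewrite E, unpair_cpair in H.
  injection H; auto.
Qed.

(* The diagonal [d = i + j] of [w = cpair i j] is the least [d] with [w < tri (S d)]. *)
Definition cdiag := cMu (cComp csub [cComp cSucc [cProj 1]; cComp ctri [cComp cSucc [cProj 0]]]).
Lemma ev_fn_diag p : ev_fn p cdiag (fun v => fst (unpair (arg v 0)) + snd (unpair (arg v 0))).
Proof.
  intro u. pose proof (unpair_tri (arg u 0)).
  eapply ev_cMu_least with (F := fun w => S (arg w 1) - tri (S (arg w 0))).
  - ev_fn_by.
  - cbn [nth]. simpl tri. lia.
  - intros m Hm. cbn [nth].
    pose proof (tri_mono (S m) (fst (unpair (arg u 0)) + snd (unpair (arg u 0))) Hm). lia.
Qed.
#[export] Hint Resolve ev_fn_diag : evfn.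

Definition csnd := cComp csub [cProj 0; cComp ctri [cdiag]].
Lemma ev_fn_snd p : ev_fn p csnd (fun v => snd (unpair (arg v 0))).
Proof. unfold csnd. ev_fn_by. pose proof (unpair_tri (arg v 0)). lia. Qed.
#[export] Hint Resolve ev_fn_snd : evfn.

Definition cfst := cComp csub [cdiag; csnd].
Lemma ev_fn_fst p : ev_fn p cfst (fun v => fst (unpair (arg v 0))).
Proof. unfold cfst. ev_fn_by. lia. Qed.
#[export] Hint Resolve ev_fn_fst : evfn.

(** * Limits of base-4 expansions with digits in {0, 1} *)

Local Open Scope R_scope.

Section Base4Limit.
Variable D : nat -> nat -> nat.
Hypothesis D_le_1 : forall L P, (D L P <= 1)%nat.
Hypothesis D_mono : forall L P, (D L P <= D (S L) P)%nat.

Fixpoint base4_prefix (L P : nat) : nat :=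
  match P with 0 => 0%nat | S P => (4 * base4_prefix L P + D L P)%nat end.

Lemma D_mono_le L L' P : (L <= L')%nat -> (D L P <= D L' P)%nat.
Proof. induction 1; [lia|]. specialize (D_mono m P). lia. Qed.

Lemma base4_prefix_mono L L' P : (L <= L')%nat -> (base4_prefix L P <= base4_prefix L' P)%nat.
Proof. intro HL. induction P; simpl; [lia|]. pose proof (D_mono_le L L' P HL). lia. Qed.

Lemma base4_prefix_split L a b : exists R,
  base4_prefix L (a + b) = (base4_prefix L a * 4 ^ b + R)%nat /\ (3 * R + 1 <= 4 ^ b)%nat.
Proof.
  induction b as [|b [R [E B]]].
  - exists 0%nat. rewrite Nat.add_0_r. simpl. lia.
  - exists (4 * R + D L (a + b))%nat. rewrite Nat.add_succ_r. simpl base4_prefix.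
    rewrite E. simpl Nat.pow. specialize (D_le_1 L (a + b)). split; nia.
Qed.

Lemma base4_prefix_stable P : exists L0, forall L, (L0 <= L)%nat -> base4_prefix L P = base4_prefix L0 P.
Proof.
  induction P as [|P [L1 H1]]; [exists 0%nat; reflexivity|].
  assert (HD : exists L2, forall L, (L2 <= L)%nat -> D L P = D L2 P).
  { destruct (classic (exists L, D L P = 1%nat)) as [[L2 E]|Hnone].
    - exists L2. intros L HL. pose proof (D_mono_le _ _ P HL). pose proof (D_le_1 L P). lia.
    - exists 0%nat. intros L _.
      assert (Hz : forall L, D L P = 0%nat).
      { intro L'. pose proof (D_le_1 L' P). destruct (D L' P) as [|[|]] eqn:E; try lia.
        exfalso. eauto. }
      rewrite !Hz. reflexivity. }
  destruct HD as [L2 H2]. exists (Nat.max L1 L2). intros L HL. simpl.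
  rewrite (H1 L), (H2 L), (H1 (Nat.max L1 L2)), (H2 (Nat.max L1 L2)); lia.
Qed.

Definition approx (L : nat) : R := INR (base4_prefix L L) / 4 ^ L.

Lemma approx_digits P L : (P <= L)%nat ->
  INR (base4_prefix L P) <= 4 ^ P * approx L <= INR (base4_prefix L P) + 1/3.
Proof.
  intro HL. destruct (base4_prefix_split L P (L - P)) as [R [E B]].
  replace (P + (L - P))%nat with L in E by lia.
  unfold approx. rewrite E. apply le_INR in B.
  rewrite plus_INR, mult_INR, pow_INR in B. rewrite plus_INR, mult_INR, pow_INR.
  replace (INR 4) with 4 in * by (simpl; lra). simpl (INR 3) in B. simpl (INR 1) in B.
  replace (4 ^ L) with (4 ^ P * 4 ^ (L - P)) by (rewrite <- pow_add; f_equal; lia).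
  assert (0 < 4 ^ P) by (apply pow_lt; lra). assert (0 < 4 ^ (L - P)) by (apply pow_lt; lra).
  replace (4 ^ P * ((INR (base4_prefix L P) * 4 ^ (L - P) + INR R) / (4 ^ P * 4 ^ (L - P))))
    with (INR (base4_prefix L P) + INR R / 4 ^ (L - P)) by (field; lra).
  pose proof (pos_INR R).
  assert (0 <= INR R / 4 ^ (L - P) <= 1/3).
  { split; [apply Rmult_le_pos; [lra | left; apply Rinv_0_lt_compat; lra]|].
    apply Rmult_le_reg_r with (4 ^ (L - P)); [lra|].
    unfold Rdiv. rewrite Rmult_assoc, Rinv_l by lra. lra. }
  lra.
Qed.

Lemma approx_bounds L : 0 <= approx L <= 1/3.
Proof.
  pose proof (approx_digits 0 L (Nat.le_0_l L)). simpl in *. lra.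
Qed.

Lemma approx_mono L L' : (L <= L')%nat -> approx L <= approx L'.
Proof.
  intro HL. pose proof (approx_digits L L' HL) as [H _].
  assert (E : 4 ^ L * approx L = INR (base4_prefix L L)).
  { unfold approx. field. apply pow_nonzero. lra. }
  apply base4_prefix_mono with (P := L) in HL. apply le_INR in HL.
  apply Rmult_le_reg_l with (4 ^ L); [apply pow_lt; lra | lra].
Qed.

Lemma approx_has_sup : bound (fun z => exists L, z = approx L).
Proof. exists (1/3). intros z [L ->]. apply approx_bounds. Qed.

Definition limit_value : R :=
  proj1_sig (completeness _ approx_has_sup (ex_intro _ (approx 0) (ex_intro _ 0%nat eq_refl))).

Lemma approx_le_limit L : approx L <= limit_value.
Proof. unfold limit_value. destruct completeness as [m [Hub Hleast]]. apply Hub. eauto. Qed.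

Lemma limit_le M : (forall L, approx L <= M) -> limit_value <= M.
Proof.
  intro HM. unfold limit_value. destruct completeness as [m [Hub Hleast]].
  apply Hleast. intros z [L ->]. apply HM.
Qed.

Lemma limit_bounds : 0 <= limit_value <= 1/3.
Proof.
  pose proof (approx_le_limit 0). pose proof (approx_bounds 0).
  split; [lra|]. apply limit_le. apply approx_bounds.
Qed.

Lemma lt_limit_iff z : z < limit_value <-> exists L, z < approx L.
Proof.
  split.
  - intro Hz. apply NNPP. intro Hnone. apply (Rlt_not_le _ _ Hz). apply limit_le.
    intro L. apply Rnot_lt_le. intro HL. apply Hnone. eauto.
  - intros [L HL]. pose proof (approx_le_limit L). lra.
Qed.

Lemma scaled_limit_le c M : 0 < c -> (forall L, c * approx L <= M) -> c * limit_value <= M.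
Proof.
  intros Hc HM. assert (H : limit_value <= M / c).
  { apply limit_le. intro L. apply Rmult_le_reg_l with c; [exact Hc|].
    replace (c * (M / c)) with M by (field; lra). apply HM. }
  replace M with (c * (M / c)) by (field; lra). apply Rmult_le_compat_l; lra.
Qed.

Lemma limit_digits P : exists L0, forall L, (L0 <= L)%nat ->
  INR (base4_prefix L P) <= 4 ^ P * limit_value <= INR (base4_prefix L P) + 1/3.
Proof.
  destruct (base4_prefix_stable P) as [L0 H0]. exists L0. intros L HL. rewrite (H0 L HL).
  assert (K : forall L', (Nat.max L0 P <= L')%nat ->
    INR (base4_prefix L0 P) <= 4 ^ P * approx L' <= INR (base4_prefix L0 P) + 1/3).
  { intros L' HL'. rewrite <- (H0 L') by lia. apply approx_digits. lia. }
  assert (0 < 4 ^ P) by (apply pow_lt; lra). split.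
  - pose proof (approx_le_limit (Nat.max L0 P)). destruct (K _ (le_n _)). nra.
  - apply scaled_limit_le; [lra|]. intro L'.
    pose proof (approx_mono L' (Nat.max L' (Nat.max L0 P)) ltac:(lia)).
    destruct (K (Nat.max L' (Nat.max L0 P)) ltac:(lia)). nra.
Qed.

End Base4Limit.

Lemma limit_lt_of_first_difference D1 D2
  (D1_le_1 : forall L P, (D1 L P <= 1)%nat) (D1_mono : forall L P, (D1 L P <= D1 (S L) P)%nat)
  (D2_le_1 : forall L P, (D2 L P <= 1)%nat) (D2_mono : forall L P, (D2 L P <= D2 (S L) P)%nat)
  P0 L0 :
  (forall L, (L0 <= L)%nat ->
     (forall P, (P < P0)%nat -> D1 L P = D2 L P) /\ D1 L P0 = 0%nat /\ D2 L P0 = 1%nat) ->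
  limit_value D1 D1_le_1 < limit_value D2 D2_le_1.
Proof.
  intro Hdiff.
  destruct (base4_prefix_stable D1 D1_le_1 D1_mono P0) as [L1 H1].
  set (K := base4_prefix D1 L1 P0).
  assert (HK : forall L, (Nat.max L0 L1 <= L)%nat ->
    base4_prefix D1 L (S P0) = (4 * K)%nat /\ base4_prefix D2 L (S P0) = (4 * K + 1)%nat).
  { intros L HL. destruct (Hdiff L ltac:(lia)) as [Hagree [E1 E2]].
    assert (Heq : base4_prefix D1 L P0 = base4_prefix D2 L P0).
    { clear - Hagree. induction P0; simpl; [reflexivity|].
      rewrite IHP0, (Hagree P0) by first [lia | intros; apply Hagree; lia]. reflexivity. }
    simpl. rewrite <- Heq, E1, E2, (H1 L) by lia. fold K. lia. }
  assert (0 < 4 ^ S P0) by (apply pow_lt; lra).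
  destruct (limit_digits D1 D1_le_1 D1_mono (S P0)) as [La Ha].
  destruct (limit_digits D2 D2_le_1 D2_mono (S P0)) as [Lb Hb].
  set (L := Nat.max (Nat.max La Lb) (Nat.max L0 L1)).
  destruct (HK L ltac:(lia)) as [E1 E2].
  specialize (Ha L ltac:(lia)). specialize (Hb L ltac:(lia)).
  rewrite E1, mult_INR in Ha. rewrite E2, plus_INR, mult_INR in Hb.
  simpl (INR 4) in *. simpl (INR 1) in Hb. nra.
Qed.

Local Open Scope nat_scope.

(** * The instance of [Proj] *)

(* Digit [2 k] of [a] ([side = 0]) becomes [1] once [s] has more than [k] ones, that of [b]
   ([side = 1]) once [s] has more than [k] zeros; digit [2 <m, <v, t>> + 1] of both becomes [1]
   once some [q_j(m)] with [j >= t] differs from [v].  Here [p] names [(s, (q_j)_j)]. *)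
Section Instance.
Variable p : baire.

Fixpoint ones_count (L : nat) : nat :=
  match L with 0 => 0 | S L => ones_count L + p (2 * L) end.

Definition side_count (side L : nat) : nat :=
  match side with 0 => ones_count L | _ => L - ones_count L end.

Definition seq_entry (j m : nat) : nat := p (2 * cpair j m + 1).

Fixpoint mismatch_seen (t m v L : nat) : nat :=
  match L with
  | 0 => 0
  | S L => Nat.max (mismatch_seen t m v L)
                   (Nat.b2n (t <=? L) * Nat.b2n (negb (seq_entry L m =? v)))
  end.

Definition digit (side L P : nat) : nat :=
  if Nat.odd P then
    let w := snd (unpair (Nat.div2 P)) in
    mismatch_seen (snd (unpair w)) (fst (unpair (Nat.div2 P))) (fst (unpair w)) L
  else Nat.b2n (Nat.div2 P <? side_count side L).

(* Even positions carry the Cauchy name [cpair 0 0] of [0]; position [2 L + 1] carries the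
   [L]-th interval [(-(1 + a_L), 1 + b_L)] of the complement of [A]. *)
Definition instance_name (n : nat) : nat :=
  if Nat.odd n then
    let L := Nat.div2 n in
    S (cpair (cpair (2 * (4 ^ L + base4_prefix (digit 0) L L) - 1) (4 ^ L - 1))
             (cpair (2 * (4 ^ L + base4_prefix (digit 1) L L)) (4 ^ L - 1)))
  else 0.

Definition cones_count :=
  cprimrec 0 cZero (cComp cadd [cProj 1; cComp cOracle [cComp cmul [cconst 2; cProj 0]]]).
Lemma ev_fn_ones_count : ev_fn p cones_count (fun v => ones_count (arg v 0)).
Proof. ev_fn_primrec_by. generalize (arg v 0); induction n; simpl; auto. Qed.
#[local] Hint Resolve ev_fn_ones_count : evfn.

Definition cseq_entry := cComp cOracle [cComp cadd [cComp cmul [cconst 2; ccpair]; cconst 1]].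
Lemma ev_fn_seq_entry : ev_fn p cseq_entry (fun v => seq_entry (arg v 0) (arg v 1)).
Proof. unfold cseq_entry. ev_fn_by. Qed.
#[local] Hint Resolve ev_fn_seq_entry : evfn.

Definition cmismatch_seen := cprimrec 3 cZero (cComp cmax [cProj 1; cComp cmul
  [cComp cle [cProj 2; cProj 0]; cComp cneq [cComp cseq_entry [cProj 0; cProj 3]; cProj 4]]]).
Lemma ev_fn_mismatch_seen :
  ev_fn p cmismatch_seen (fun v => mismatch_seen (arg v 1) (arg v 2) (arg v 3) (arg v 0)).
Proof. ev_fn_primrec_by. generalize (arg v 0); induction n; simpl; auto. Qed.
#[local] Hint Resolve ev_fn_mismatch_seen : evfn.

Definition cdigit :=
  let P := cProj 2 in let c := cComp chalf [P] in let w := cComp csnd [c] in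
  cComp cifz [cComp codd [P];
    cComp clt [c; cComp cifz [cProj 0; cComp cones_count [cProj 1];
                              cComp csub [cProj 1; cComp cones_count [cProj 1]]]];
    cComp cmismatch_seen [cProj 1; cComp csnd [w]; cComp cfst [c]; cComp cfst [w]]].
Lemma ev_fn_digit : ev_fn p cdigit (fun v => digit (arg v 0) (arg v 1) (arg v 2)).
Proof.
  unfold cdigit. ev_fn_by. unfold digit, side_count.
  destruct (Nat.odd (arg v 2)); [reflexivity|]. destruct (arg v 0); reflexivity.
Qed.
#[local] Hint Resolve ev_fn_digit : evfn.

Definition cprefix := cprimrec 2 cZero
  (cComp cadd [cComp cmul [cconst 4; cProj 1]; cComp cdigit [cProj 2; cProj 3; cProj 0]]).
Lemma ev_fn_prefix : ev_fn p cprefix (fun v => base4_prefix (digit (arg v 1)) (arg v 2) (arg v 0)).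
Proof.
  ev_fn_primrec_by. generalize (arg v 0); induction n; simpl; [reflexivity|].
  rewrite IHn. reflexivity.
Qed.
#[local] Hint Resolve ev_fn_prefix : evfn.

End Instance.

#[export] Hint Resolve ev_fn_prefix : evfn.

Definition cinstance_name :=
  let L := cComp chalf [cProj 0] in let E := cComp cpow4 [L] in
  cComp cifz [cComp codd [cProj 0]; cZero;
    cComp cSucc [cComp ccpair [
      cComp ccpair [cComp csub [cComp cmul [cconst 2; cComp cadd [E; cComp cprefix [L; cZero; L]]];
                                cconst 1];
                    cComp csub [E; cconst 1]];
      cComp ccpair [cComp cmul [cconst 2; cComp cadd [E; cComp cprefix [L; cconst 1; L]]];
                    cComp csub [E; cconst 1]]]]].
Lemma computes_instance_name p : computes cinstance_name p (instance_name p).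
Proof.
  assert (H : ev_fn p cinstance_name (fun v => instance_name p (arg v 0))).
  { unfold cinstance_name. ev_fn_by.
    unfold instance_name. destruct (Nat.odd (arg v 0)); reflexivity. }
  intro n. apply (H [n]).
Qed.

Section InstanceProperties.
Variable p : baire.
Hypothesis p_bits : forall k, p (2 * k) <= 1.

Lemma ones_count_le L : ones_count p L <= L.
Proof. induction L; cbn [ones_count]; [lia|]. specialize (p_bits L). lia. Qed.

Lemma ones_count_eventually b N k : (forall n, N <= n -> p (2 * n) = b) ->
  ones_count p (N + k) = ones_count p N + k * b.
Proof.
  intro Hb. induction k; [rewrite Nat.add_0_r; lia|].
  rewrite Nat.add_succ_r. cbn [ones_count]. rewrite IHk, Hb by lia. lia.
Qed.

Lemma mismatch_seen_le_1 t m v L : mismatch_seen p t m v L <= 1.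
Proof.
  induction L; cbn [mismatch_seen]; [lia|].
  pose proof (Nat.b2n_le_1 (t <=? L)). pose proof (Nat.b2n_le_1 (negb (seq_entry p L m =? v))). nia.
Qed.

Lemma mismatch_seen_zero t m v : (forall j, t <= j -> seq_entry p j m = v) ->
  forall L, mismatch_seen p t m v L = 0.
Proof.
  intros H L. induction L; cbn [mismatch_seen]; [reflexivity|]. rewrite IHL.
  destruct (Nat.leb_spec t L); [|reflexivity]. rewrite H, Nat.eqb_refl by lia. reflexivity.
Qed.

Lemma mismatch_seen_one t m v j : t <= j -> seq_entry p j m <> v ->
  forall L, j < L -> mismatch_seen p t m v L = 1.
Proof.
  intros Htj Hj L HL. induction HL; cbn [mismatch_seen].
  - apply Nat.leb_le in Htj. apply Nat.eqb_neq in Hj. rewrite Htj, Hj.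
    pose proof (mismatch_seen_le_1 t m v j). simpl. lia.
  - rewrite IHHL. pose proof (mismatch_seen_le_1 t m v (S m0)).
    cbn [mismatch_seen] in H. rewrite IHHL in H. lia.
Qed.

Lemma digit_even side L k : digit p side L (2 * k) = Nat.b2n (k <? side_count p side L).
Proof. unfold digit. rewrite Nat.odd_even, Nat.div2_double. reflexivity. Qed.

Lemma digit_odd side L m w :
  digit p side L (2 * cpair m w + 1) = mismatch_seen p (snd (unpair w)) m (fst (unpair w)) L.
Proof. unfold digit. rewrite Nat.odd_odd, Nat.div2_odd', unpair_cpair. reflexivity. Qed.

Lemma digit_odd_side_indep side side' L P : Nat.odd P = true -> digit p side L P = digit p side' L P.
Proof. intro HP. unfold digit. rewrite HP. reflexivity. Qed.

Lemma digit_le_1 side L P : digit p side L P <= 1.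
Proof. unfold digit. destruct (Nat.odd P); [apply mismatch_seen_le_1 | apply Nat.b2n_le_1]. Qed.

Lemma digit_mono side L P : digit p side L P <= digit p side (S L) P.
Proof.
  unfold digit. destruct (Nat.odd P); [cbn [mismatch_seen]; lia|].
  assert (Hcount : side_count p side L <= side_count p side (S L)).
  { unfold side_count. cbn [ones_count]. pose proof (p_bits L). pose proof (ones_count_le L).
    destruct side; lia. }
  destruct (Nat.ltb_spec (Nat.div2 P) (side_count p side L)),
           (Nat.ltb_spec (Nat.div2 P) (side_count p side (S L))); simpl; lia.
Qed.

Definition value (side : nat) : R := limit_value (digit p side) (digit_le_1 side).

(* The two expansions first differ at digit [2 C]. *)
Lemma value_lt_of_counts side side' C N :
  (forall L, N <= L -> side_count p side L = C /\ C < side_count p side' L) ->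
  (value side < value side')%R.
Proof.
  intro Hcounts. unfold value.
  apply (limit_lt_of_first_difference _ _ _ (digit_mono side) _ (digit_mono side') (2 * C) N).
  intros L HL. destruct (Hcounts L HL) as [E1 E2].
  rewrite !digit_even, E1. split; [|split].
  - intros P HP. rewrite (Nat.div2_odd P). destruct (Nat.odd P) eqn:Hodd.
    + apply digit_odd_side_indep. rewrite <- Hodd, <- Nat.div2_odd. reflexivity.
    + rewrite Nat.add_0_r, !digit_even, E1.
      assert (Hk : Nat.div2 P < C) by (rewrite (Nat.div2_odd P), Hodd in HP; simpl in HP; lia).
      destruct (Nat.ltb_spec (Nat.div2 P) C), (Nat.ltb_spec (Nat.div2 P) (side_count p side' L)); lia.
  - destruct (Nat.ltb_spec C C); [lia | reflexivity].
  - destruct (Nat.ltb_spec C (side_count p side' L)); [reflexivity | lia].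
Qed.

Lemma value_lt_of_eventually_zero : (exists N, forall n, N <= n -> p (2 * n) = 0) ->
  (value 0 < value 1)%R.
Proof.
  intros [N HN]. apply (value_lt_of_counts 0 1 (ones_count p N) (N + S (2 * ones_count p N) )).
  intros L HL. unfold side_count.
  replace L with (N + (L - N)) by lia. rewrite (ones_count_eventually 0 N) by exact HN. lia.
Qed.

Lemma value_lt_of_eventually_one : (exists N, forall n, N <= n -> p (2 * n) = 1) ->
  (value 1 < value 0)%R.
Proof.
  intros [N HN]. pose proof (ones_count_le N).
  apply (value_lt_of_counts 1 0 (N - ones_count p N) (N + S N)).
  intros L HL. unfold side_count.
  replace L with (N + (L - N)) by lia. rewrite (ones_count_eventually 1 N) by exact HN. lia.
Qed.

End InstanceProperties.

Local Open Scope R_scope.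

(** * Projecting [0] onto two rays *)

Definition two_rays (a b : R) : R -> Prop := fun x => x <= - a \/ b <= x.

Lemma two_rays_closed a b : closed_set (two_rays a b).
Proof.
  intros x Hx. unfold complementary, two_rays in Hx.
  assert (Hab : - a < x < b) by (split; apply Rnot_le_lt; intro; apply Hx; auto).
  assert (Hpos : 0 < Rmin (x + a) (b - x)) by (apply Rmin_pos; lra).
  exists (mkposreal _ Hpos). intros z Hz. unfold disc in Hz. simpl in Hz.
  pose proof (Rmin_l (x + a) (b - x)). pose proof (Rmin_r (x + a) (b - x)).
  apply Rabs_def2 in Hz. unfold complementary, two_rays. lra.
Qed.

Lemma dist0_two_rays a b z : 0 < a -> 0 < b -> two_rays a b z -> Rmin a b <= Rabs (0 - z).
Proof.
  intros Ha Hb [Hz|Hz]; rewrite Rminus_0_l, Rabs_Ropp.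
  - rewrite Rabs_left by lra. pose proof (Rmin_l a b). lra.
  - rewrite Rabs_right by lra. pose proof (Rmin_r a b). lra.
Qed.

Lemma Proj_two_rays_end a b y : 0 < a -> 0 < b -> two_rays a b y -> Rabs (0 - y) = Rmin a b ->
  Proj (0, two_rays a b) y.
Proof.
  intros Ha Hb Hy Ey. unfold Proj. cbn [fst snd].
  split; [apply two_rays_closed|]. split; [eauto|]. split; [exact Hy|]. split.
  - intros r [z [Hz ->]]. rewrite Ey. apply dist0_two_rays; auto.
  - intros m Hm. apply Hm. eauto.
Qed.

Lemma Proj_two_rays_dom a b : 0 < a -> 0 < b -> mdom Proj (0, two_rays a b).
Proof.
  intros Ha Hb. destruct (Rle_or_lt a b) as [Hab|Hab].
  - exists (- a). apply Proj_two_rays_end; auto.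
    + left. lra.
    + rewrite Rmin_left, Rminus_0_l, Ropp_involutive, Rabs_right; lra.
  - exists b. apply Proj_two_rays_end; auto.
    + right. lra.
    + rewrite Rmin_right, Rminus_0_l, Rabs_Ropp, Rabs_right; lra.
Qed.

Lemma Proj_two_rays a b y : 0 < a -> 0 < b -> Proj (0, two_rays a b) y ->
  (y = - a /\ a <= b) \/ (y = b /\ b <= a).
Proof.
  intros Ha Hb. unfold Proj. cbn [fst snd]. intros [_ [_ [Hy [Hinf _]]]].
  assert (Hle_a : Rabs (0 - y) <= a).
  { apply Rle_trans with (Rabs (0 - - a)).
    - apply Hinf. exists (- a). split; [left; lra | reflexivity].
    - rewrite Rminus_0_l, Ropp_involutive, Rabs_right; lra. }
  assert (Hle_b : Rabs (0 - y) <= b).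
  { apply Rle_trans with (Rabs (0 - b)).
    - apply Hinf. exists b. split; [right; lra | reflexivity].
    - rewrite Rminus_0_l, Rabs_Ropp, Rabs_right; lra. }
  rewrite Rminus_0_l, Rabs_Ropp in Hle_a, Hle_b. destruct Hy as [Hy|Hy].
  - left. rewrite Rabs_left in Hle_a, Hle_b by lra. lra.
  - right. rewrite Rabs_right in Hle_a, Hle_b by lra. lra.
Qed.

(** * Reading the projection *)

Definition nat_abs_dec (i : nat) : nat := if Nat.odd i then S (Nat.div2 i) else Nat.div2 i.

Lemma qdec_eq i j :
  qdec i j = (if Nat.odd i then - INR (nat_abs_dec i) else INR (nat_abs_dec i)) / INR (S j).
Proof.
  unfold qdec, Q2R, nat_abs_dec, zdec. cbn [Qnum Qden].
  rewrite Zpos_P_of_succ_nat, <- Nat2Z.inj_succ, <- INR_IZR_INZ, <- Nat.negb_odd.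
  destruct (Nat.odd i); simpl negb; cbv iota.
  - rewrite opp_IZR, <- INR_IZR_INZ. reflexivity.
  - rewrite <- INR_IZR_INZ. reflexivity.
Qed.

Lemma qdec_abs i j : Rabs (qdec i j) = INR (nat_abs_dec i) / INR (S j).
Proof.
  rewrite qdec_eq. assert (0 < INR (S j)) by (apply lt_0_INR; lia).
  unfold Rdiv. rewrite Rabs_mult, Rabs_inv, (Rabs_right (INR (S j))) by lra.
  destruct (Nat.odd i); [rewrite Rabs_Ropp|]; rewrite Rabs_right by (apply Rle_ge, pos_INR); reflexivity.
Qed.

Lemma qdec_sign i j : if Nat.odd i then qdec i j < 0 else 0 <= qdec i j.
Proof.
  rewrite qdec_eq. assert (0 < / INR (S j)) by (apply Rinv_0_lt_compat, lt_0_INR; lia).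
  unfold nat_abs_dec, Rdiv. destruct (Nat.odd i).
  - assert (0 < INR (S (Nat.div2 i))) by apply lt_0_INR, Nat.lt_0_succ. nra.
  - apply Rmult_le_pos; [apply pos_INR | lra].
Qed.

Lemma qdec_neg N E : (1 <= N)%nat -> (1 <= E)%nat -> qdec (2 * N - 1) (E - 1) = - INR N / INR E.
Proof.
  intros. rewrite qdec_eq. replace (2 * N - 1)%nat with (2 * (N - 1) + 1)%nat by lia.
  unfold nat_abs_dec. rewrite Nat.odd_odd, Nat.div2_odd'.
  replace (S (N - 1)) with N by lia. replace (S (E - 1)) with E by lia. reflexivity.
Qed.

Lemma qdec_pos N E : (1 <= E)%nat -> qdec (2 * N) (E - 1) = INR N / INR E.
Proof.
  intros. rewrite qdec_eq. unfold nat_abs_dec. rewrite Nat.odd_even, Nat.div2_double.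
  replace (S (E - 1)) with E by lia. reflexivity.
Qed.

Lemma Rabs_le_between z e : Rabs z <= e -> - e <= z <= e.
Proof. intro H. pose proof (Rle_abs z). pose proof (Rle_abs (- z)). rewrite Rabs_Ropp in *. lra. Qed.

(* With [d = S j], [(2 u E + d) / (2 d)] rounds [E * u / d] to the nearest integer. *)
Lemma round_scaled u j E K x : (0 < E)%nat ->
  INR K <= INR E * x <= INR K + 1/3 -> Rabs (INR u / INR (S j) - x) <= / (16 * INR E) ->
  ((2 * u * E + S j) / S (2 * j + 1) = K)%nat.
Proof.
  intros HE Hx Hq. apply lt_0_INR in HE.
  assert (Hd : 0 < INR (S j)) by (apply lt_0_INR; lia).
  set (w := INR u / INR (S j)) in *.
  assert (Hu : INR u = w * INR (S j)) by (unfold w; field; lra).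
  assert (Hw : Rabs (INR E * w - INR E * x) <= / 16).
  { rewrite <- Rmult_minus_distr_l, Rabs_mult, Rabs_right by lra.
    apply Rmult_le_compat_l with (r := INR E) in Hq; [|lra].
    replace (INR E * / (16 * INR E)) with (/ 16) in Hq by (field; lra). exact Hq. }
  apply Rabs_le_between in Hw.
  assert (Hden : INR (S (2 * j + 1)) = 2 * INR (S j))
    by (rewrite !S_INR, plus_INR, mult_INR; simpl; ring).
  assert (Hnum : INR (2 * u * E + S j) = 2 * (INR E * w) * INR (S j) + INR (S j))
    by (rewrite plus_INR, !mult_INR, Hu; simpl; ring).
  set (d := INR (S j)) in *. set (z := INR E * w) in *.
  assert (Hz : INR K + 7/16 <= z + 1/2 < INR K + 1) by lra.
  apply Nat.le_antisymm.
  - apply Nat.lt_succ_r, Nat.Div0.div_lt_upper_bound. apply INR_lt.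
    rewrite mult_INR, Hden, Hnum, (S_INR K). fold d. nra.
  - apply Nat.div_le_lower_bound; [lia|]. apply INR_le.
    rewrite mult_INR, Hden, Hnum. fold d. nra.
Qed.

Local Open Scope nat_scope.

Section Decoding.
Variable r : baire.

(* [4^(P+1) |y|] rounded to the nearest integer, from the [2^-(2 P + 6)]-approximation
   [r (2 P + 6)] of [y]; its last base-4 digit is digit [P] of [|y| - 1]. *)
Definition scaled_round (P : nat) : nat :=
  let x := r (2 * P + 6) in
  (2 * nat_abs_dec (fst (unpair x)) * 4 ^ S P + S (snd (unpair x))) / S (2 * snd (unpair x) + 1).

Definition decoded_digit (P : nat) : nat := scaled_round P - 4 * (scaled_round P / S 3).

Definition sign_bit : nat := 1 - Nat.b2n (Nat.odd (fst (unpair (r 1)))).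

Definition cscaled_round :=
  let x := cComp cOracle [cComp cadd [cComp cmul [cconst 2; cProj 0]; cconst 6]] in
  let i := cComp cfst [x] in let j := cComp csnd [x] in
  let u := cComp cifz [cComp codd [i]; cComp chalf [i]; cComp cSucc [cComp chalf [i]]] in
  cComp cdivS [cComp cadd [cComp cmul [cComp cmul [cconst 2; u]; cComp cpow4 [cComp cSucc [cProj 0]]];
                           cComp cSucc [j]];
               cComp cadd [cComp cmul [cconst 2; j]; cconst 1]].
Lemma ev_fn_scaled_round : ev_fn r cscaled_round (fun v => scaled_round (arg v 0)).
Proof.
  unfold cscaled_round. ev_fn_by. unfold scaled_round, nat_abs_dec.
  destruct (Nat.odd _); reflexivity.
Qed.
#[local] Hint Resolve ev_fn_scaled_round : evfn.

Definition cdecoded_digit :=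
  cComp csub [cscaled_round; cComp cmul [cconst 4; cComp cdivS [cscaled_round; cconst 3]]].
Lemma ev_fn_decoded_digit : ev_fn r cdecoded_digit (fun v => decoded_digit (arg v 0)).
Proof. unfold cdecoded_digit. ev_fn_by. Qed.
#[local] Hint Resolve ev_fn_decoded_digit : evfn.

Definition csearch :=
  cMu (cComp cdecoded_digit
         [cComp cadd [cComp cmul [cconst 2; cComp ccpair [cProj 1; cProj 0]]; cconst 1]]).
Lemma ev_search m w : decoded_digit (2 * cpair m w + 1) = 0 ->
  (forall w', w' < w -> decoded_digit (2 * cpair m w' + 1) <> 0) -> ev r csearch [m] w.
Proof.
  intros Hw Hlt.
  apply (ev_cMu_least r _ (fun v => decoded_digit (2 * cpair (arg v 1) (arg v 0) + 1)) [m] w);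
    [| exact Hw | exact Hlt].
  ev_fn_by.
Qed.

Definition csign_bit := cComp csub [cconst 1; cComp codd [cComp cfst [cComp cOracle [cconst 1]]]].
Lemma ev_fn_sign_bit : ev_fn r csign_bit (fun _ => sign_bit).
Proof. unfold csign_bit. ev_fn_by. Qed.

Definition coutput := cprimrec 0 csign_bit (cComp cfst [cComp csearch [cComp chalf [cProj 0]]]).

Lemma computes_output (ql : nat -> nat) :
  (forall m, exists w, ev r csearch [m] w /\ fst (unpair w) = ql m) ->
  computes coutput r (fun n => match n with 0 => sign_bit | S n' => ql (Nat.div2 n') end).
Proof.
  intros Hsearch n. unfold coutput, cprimrec. eapply ev_comp; [apply (evs_proj r [0] [n])|]. simpl.
  induction n as [|n IH].
  - constructor. apply ev_fn_sign_bit.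
  - eapply ev_recS; [exact IH|]. destruct (Hsearch (Nat.div2 n)) as [w [Hw <-]].
    eapply ev_comp; [|apply (ev_fn_fst r [w])]. constructor; [|constructor].
    eapply ev_comp; [|exact Hw]. constructor; [|constructor].
    eapply ev_comp; [|apply (ev_fn_half r [n])]. constructor; [apply ev_proj | constructor].
Qed.

End Decoding.

Local Open Scope R_scope.

Lemma decoded_digit_eventually r y D
  (D_le_1 : forall L P, (D L P <= 1)%nat) (D_mono : forall L P, (D L P <= D (S L) P)%nat) :
  dR r y -> Rabs y = 1 + limit_value D D_le_1 ->
  forall P, exists L0, forall L, (L0 <= L)%nat -> decoded_digit r P = D L P.
Proof.
  intros Hr Hy P. destruct (limit_digits D D_le_1 D_mono (S P)) as [L0 HL0].
  exists L0. intros L HL. specialize (HL0 L HL).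
  destruct (Hr (2 * P + 6)%nat) as [i [j [Er Hq]]].
  assert (Hround : scaled_round r P = (4 ^ S P + base4_prefix D L (S P))%nat).
  { unfold scaled_round. rewrite Er, unpair_cpair. cbn [fst snd].
    apply (round_scaled (nat_abs_dec i) j (4 ^ S P) _ (Rabs y)).
    - apply Nat.neq_0_lt_0, Nat.pow_nonzero. discriminate.
    - rewrite plus_INR, pow_INR, Hy. replace (INR 4) with 4 by (simpl; lra). lra.
    - rewrite pow_INR, <- qdec_abs. replace (INR 4) with 4 by (simpl; lra).
      eapply Rle_trans; [apply Rabs_triang_inv2|]. eapply Rle_trans; [exact Hq|].
      right. rewrite pow_inv. f_equal.
      replace (2 * P + 6)%nat with (2 * S (S (S P)))%nat by lia. rewrite pow_mult.
      replace (2 ^ 2) with 4 by ring. simpl. ring. }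
  unfold decoded_digit. rewrite Hround. cbn [base4_prefix Nat.pow].
  pose proof (D_le_1 L P).
  replace ((4 * 4 ^ P + (4 * base4_prefix D L P + D L P)) / S 3)%nat
    with (4 ^ P + base4_prefix D L P)%nat by (apply Nat.div_unique with (r := D L P); lia).
  lia.
Qed.

Local Open Scope R_scope.

Lemma least_witness (P : nat -> Prop) : (forall n, P n \/ ~ P n) -> (exists n, P n) ->
  exists n, P n /\ forall m, (m < n)%nat -> ~ P m.
Proof.
  intros Hdec Hex.
  destruct (dec_inh_nat_subset_has_unique_least_element P Hdec Hex) as [n [[Pn Hmin] _]].
  exists n. split; [exact Pn|]. intros m Hm Pm. specialize (Hmin m Pm). lia.
Qed.

Lemma not_BWT2_eventually s b : ~ BWT2 s b -> exists N, forall n, (N <= n)%nat -> s n = negb b.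
Proof.
  intro Hnot. apply not_all_ex_not in Hnot as [N HN]. exists N. intros n Hn.
  destruct (Bool.bool_dec (s n) b) as [E|E]; [exfalso; eauto|].
  destruct (s n), b; simpl in *; congruence.
Qed.

Lemma sign_bit_spec r y : dR r y -> (y <= -1 -> sign_bit r = 0%nat) /\ (1 <= y -> sign_bit r = 1%nat).
Proof.
  intro Hr. destruct (Hr 1%nat) as [i [j [E Hq]]]. unfold sign_bit. rewrite E, unpair_cpair. cbn [fst].
  pose proof (qdec_sign i j) as Hsign. simpl pow in Hq. rewrite Rmult_1_r in Hq.
  apply Rabs_le_between in Hq.
  destruct (Nat.odd i); simpl; split; intro Hy; solve [reflexivity | exfalso; lra].
Qed.

Section Reduction.
Variable p : baire.
Hypothesis p_bits : forall k, (p (2 * k) <= 1)%nat.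

Definition instance_set : R -> Prop := two_rays (1 + value p 0) (1 + value p 1).

Lemma value_nonneg side : 0 <= value p side.
Proof. apply limit_bounds. Qed.

Lemma instance_interval n : instance_name p (2 * n + 1) =
  S (cpair (cpair (2 * (4 ^ n + base4_prefix (digit p 0) n n) - 1) (4 ^ n - 1))
           (cpair (2 * (4 ^ n + base4_prefix (digit p 1) n n)) (4 ^ n - 1))).
Proof. unfold instance_name. rewrite Nat.odd_odd, Nat.div2_odd'. reflexivity. Qed.

Lemma qdec_interval_ends n :
  qdec (2 * (4 ^ n + base4_prefix (digit p 0) n n) - 1) (4 ^ n - 1)
    = - (1 + approx (digit p 0) n) /\
  qdec (2 * (4 ^ n + base4_prefix (digit p 1) n n)) (4 ^ n - 1) = 1 + approx (digit p 1) n.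
Proof.
  assert (H4 : (1 <= 4 ^ n)%nat) by (apply Nat.neq_0_lt_0, Nat.pow_nonzero; discriminate).
  assert (HE : 0 < 4 ^ n) by (apply pow_lt; lra).
  rewrite qdec_neg, qdec_pos by lia. unfold approx.
  rewrite !plus_INR, pow_INR. replace (INR 4) with 4 by (simpl; lra).
  split; field; lra.
Qed.

Lemma instance_complement x :
  (exists n i j k l, instance_name p (2 * n + 1) = S (cpair (cpair i j) (cpair k l))
                     /\ qdec i j < x < qdec k l)
  <-> - (1 + value p 0) < x < 1 + value p 1.
Proof.
  unfold value. split.
  - intros [n [i [j [k [l [E Hx]]]]]]. rewrite instance_interval in E.
    apply eq_add_S, cpair_inj in E as [E1 E2].
    apply cpair_inj in E1 as [<- <-]. apply cpair_inj in E2 as [<- <-].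
    destruct (qdec_interval_ends n) as [-> ->] in Hx.
    pose proof (approx_le_limit _ (digit_le_1 p 0) n).
    pose proof (approx_le_limit _ (digit_le_1 p 1) n). lra.
  - intros [Hlo Hhi].
    destruct (proj1 (lt_limit_iff _ (digit_le_1 p 0) (- x - 1)) ltac:(lra)) as [n0 H0].
    destruct (proj1 (lt_limit_iff _ (digit_le_1 p 1) (x - 1)) ltac:(lra)) as [n1 H1].
    set (n := Nat.max n0 n1).
    pose proof (approx_mono _ (digit_le_1 p 0) (digit_mono p p_bits 0) n0 n ltac:(lia)).
    pose proof (approx_mono _ (digit_le_1 p 1) (digit_mono p p_bits 1) n1 n ltac:(lia)).
    destruct (qdec_interval_ends n) as [E0 E1].
    exists n. do 4 eexists. split; [apply instance_interval|]. rewrite E0, E1. lra.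
Qed.

Lemma instance_name_correct : dprod dR dA (instance_name p) (0, instance_set).
Proof.
  split; cbn [fst snd].
  - intro n. exists 0%nat, 0%nat. split.
    + unfold instance_name. rewrite Nat.odd_even. reflexivity.
    + rewrite qdec_eq. simpl. unfold Rdiv. rewrite Rmult_0_l, Rminus_0_r, Rabs_R0.
      apply pow_le. lra.
  - intro x. rewrite instance_complement. unfold instance_set, two_rays.
    destruct (Rle_or_lt x (- (1 + value p 0))), (Rle_or_lt (1 + value p 1) x); intuition lra.
Qed.

Lemma instance_dom : mdom Proj (0, instance_set).
Proof. pose proof (value_nonneg 0). pose proof (value_nonneg 1). apply Proj_two_rays_dom; lra. Qed.

Lemma Proj_instance y : Proj (0, instance_set) y ->
  (y = - (1 + value p 0) /\ value p 0 <= value p 1) \/ (y = 1 + value p 1 /\ value p 1 <= value p 0).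
Proof.
  intro Hy. pose proof (value_nonneg 0). pose proof (value_nonneg 1).
  apply Proj_two_rays in Hy; lra.
Qed.


(* Digit [2 <m, w> + 1] of [|y| - 1] is [0] exactly when [w = <v, t>] with [q_j(m) = v] for all
   [j >= t]; the least such [w] therefore carries the limit [v] of [q_j(m)]. *)
Lemma search_finds_limit r y side m v N : dR r y -> Rabs y = 1 + value p side ->
  (forall j, (N <= j)%nat -> seq_entry p j m = v) ->
  exists w, ev r csearch [m] w /\ fst (unpair w) = v.
Proof.
  intros Hr Hy HN.
  set (Z := fun w => forall j, (snd (unpair w) <= j)%nat -> seq_entry p j m = fst (unpair w)).
  assert (HZ : forall w, decoded_digit r (2 * cpair m w + 1) = 0%nat <-> Z w).
  { intro w. destruct (decoded_digit_eventually r y _ _ (digit_mono p p_bits side) Hr Hy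
                         (2 * cpair m w + 1)) as [L0 HL0].
    split.
    - intros E j Hj. apply NNPP. intro Hneq.
      rewrite (HL0 (Nat.max L0 (S j))), digit_odd, (mismatch_seen_one p _ _ _ j Hj Hneq) in E by lia.
      discriminate.
    - intro Zw. rewrite (HL0 L0), digit_odd by lia. apply mismatch_seen_zero. exact Zw. }
  destruct (least_witness (fun w => decoded_digit r (2 * cpair m w + 1) = 0%nat))
    as [w [Hw Hmin]].
  - intro w. destruct (Nat.eq_dec (decoded_digit r (2 * cpair m w + 1)) 0); auto.
  - exists (cpair v N). apply HZ. intros j Hj. rewrite unpair_cpair in *. apply HN, Hj.
  - exists w. split; [apply ev_search; auto|].
    apply HZ in Hw. rewrite <- (Hw (Nat.max (snd (unpair w)) N)) by lia. apply HN. lia.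
Qed.

Lemma search_finds_limits r y qs ql : dR r y -> Proj (0, instance_set) y ->
  dSeq (fun n => p (2 * n + 1)%nat) qs -> lim qs ql ->
  forall m, exists w, ev r csearch [m] w /\ fst (unpair w) = ql m.
Proof.
  intros Hr Hy Hqs Hlim m. destruct (Hlim (S m)) as [N HN].
  assert (Hentry : forall j, (N <= j)%nat -> seq_entry p j m = ql m).
  { intros j Hj. unfold seq_entry. rewrite (Hqs j m). apply HN; lia. }
  pose proof (value_nonneg 0). pose proof (value_nonneg 1).
  destruct (Proj_instance y Hy) as [[-> _]|[-> _]].
  - apply (search_finds_limit r _ 0 m _ N Hr); [rewrite Rabs_left; lra | exact Hentry].
  - apply (search_finds_limit r _ 1 m _ N Hr); [rewrite Rabs_right; lra | exact Hentry].
Qed.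



Lemma BWT2_sign_bit s r y : dCantor (fun n => p (2 * n)%nat) s -> dR r y -> Proj (0, instance_set) y ->
  BWT2 s (sign_bit r =? 1)%nat.
Proof.
  intros Hs Hr Hy. pose proof (value_nonneg 0). pose proof (value_nonneg 1).
  assert (Hevent : forall b, ~ BWT2 s b ->
            exists N, forall n, (N <= n)%nat -> p (2 * n)%nat = (if b then 0 else 1)%nat).
  { intros b Hnot. destruct (not_BWT2_eventually s b Hnot) as [N HN]. exists N.
    intros n Hn. rewrite (Hs n), HN by exact Hn. destruct b; reflexivity. }
  destruct (sign_bit_spec r y Hr) as [Hneg Hpos].
  destruct (Proj_instance y Hy) as [[Ey Hle]|[Ey Hle]].
  - rewrite Hneg by lra. apply NNPP. intro Hnot.
    pose proof (value_lt_of_eventually_one p p_bits (Hevent false Hnot)). lra.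
  - rewrite Hpos by lra. apply NNPP. intro Hnot.
    pose proof (value_lt_of_eventually_zero p p_bits (Hevent true Hnot)). lra.
Qed.

End Reduction.

Lemma output_name_correct r (ql : baire) :
  dprod dBool dBaire (fun n => match n with 0 => sign_bit r | S n' => ql (Nat.div2 n') end)
        ((sign_bit r =? 1)%nat, ql).
Proof.
  split; cbn [fst snd].
  - unfold dBool, sign_bit. simpl. destruct (Nat.odd _); reflexivity.
  - intro n. rewrite Nat.add_1_r, Nat.div2_double. reflexivity.
Qed.

Theorem lemma4p12 :
  sW_reducible (dprod dCantor dSeq) (dprod dBool dBaire) (mvprod BWT2 lim)
               (dprod dR dA) dR Proj.
Proof.
  exists coutput, cinstance_name.
  intros G HG p [s qs] [Hs Hqs] [[b ql] [_ Hlim]]. cbn [fst snd] in *.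
  assert (p_bits : forall k, (p (2 * k) <= 1)%nat) by (intro k; rewrite (Hs k); destruct (s k); lia).
  exists (instance_name p). split; [apply computes_instance_name|].
  destruct (HG _ _ (instance_name_correct p p_bits) (instance_dom p)) as [r [Gr [y [Hr Hy]]]].
  exists r. split; [exact Gr|].
  exists (fun n => match n with 0 => sign_bit r | S n' => ql (Nat.div2 n') end). split.
  { apply computes_output. exact (search_finds_limits p p_bits r y qs ql Hr Hy Hqs Hlim). }
  eexists. split; [apply output_name_correct|].
  split; [apply (BWT2_sign_bit p p_bits s r y) | exact Hlim]; assumption.
Qed.
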